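(* For integers $m,n\ge 0$ let $p_m(n)=\prod_{1\le i\le j\le m-1}\frac{2n+i+j}{i+j}$. Then $p_m(0)=1$ and $p_m(1)=C_m$ for all $m\ge 0$, and for all $m\ge 0$, $n\ge 2$, $$p_m(n-1)p_{m+2}(n-1)-p_{m+1}(n-1)^2=p_m(n)\,p_{m+2}(n-2).$$ Moreover, these numbers are uniquely determined by this recursion and these initial values: if $(q_m(n))_{m,n\ge 0}$ is any family of complex numbers with $q_m(0)=1$, $q_m(1)=C_m$ for all $m\ge0$ and $q_m(n-1)q_{m+2}(n-1)-q_{m+1}(n-1)^2=q_m(n)\,q_{m+2}(n-2)$ for all $m\ge 0$, $n\ge 2$, then $q_m(n)=p_m(n)$ for all $m,n\ge 0$.
   Context: $C_m=\frac{1}{m+1}\binom{2m}{m}$ denotes the $m$-th Catalan number. Empty products equal $1$. It is known that $p_m(n)=\det(C_{m+i+j})_{i,j=0}^{n-1}$ for all integers $m,n\ge 0$. *)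

From HB Require Import structures.
From mathcomp Require Import all_boot all_order all_algebra.
Set Implicit Arguments. Unset Strict Implicit. Unset Printing Implicit Defensive.
Import Order.TTheory GRing.Theory Num.Theory.
Local Open Scope ring_scope.

Definition pmn (F : fieldType) (m n : nat) : F :=
  \prod_(1 <= i < m) \prod_(i <= j < m) ((2 * n + i + j)%N%:R / (i + j)%N%:R).

Definition catalan (F : fieldType) (m : nat) : F :=
  ('C(2 * m, m))%:R / (m.+1)%:R.

From HB Require Import structures.
From mathcomp Require Import all_boot all_order all_algebra.
From mathcomp Require Import ring zify.
Import Order.TTheory GRing.Theory Num.Theory.
Local Open Scope ring_scope.

(* Write rise c k = (c+1)(c+2)...(c+k-1), a ratio of factorials.
   The double product p_m(n) is handled through its two "ratios":
     p_{m+1}(n) = p_m(n) * ratio_m m n,     p_m(n+1) = p_m(n) * ratio_n m n,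
   where ratio_m and ratio_n are explicit quotients of rising products (adding the
   column j = m to the product, resp. shifting 2n by 2).  Writing every
   p appearing in the recurrence as p_m(n) times such ratios, and using
   rise (c+2) k = rise c (k+2) / rise c 3, the recurrence becomes a
   rational identity in finitely many values of rise, closed by 'field'.
   The initial values follow the same way: p_m(0) = 1 because ratio_m m 0 = 1,
   and p_m(1) = C_m because C_{m+1} / C_m = ratio_m m 1.
   Uniqueness is a general fact: a two-step recurrence of this shape, whose
   solution p never vanishes, determines row n+2 from rows n and n+1; since
   p_m(n) > 0 in an ordered field, any q with the same two initial rows
   coincides with p (induction on n, for all m simultaneously). *)

Definition hankel_rec {R : pzRingType} (q : nat -> nat -> R) : Prop :=
  forall m n : nat,
    q m n.+1 * q m.+2 n.+1 - (q m.+1 n.+1) ^+ 2 = q m n.+2 * q m.+2 n.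

(* A solution of the recurrence that never vanishes is determined by its
   rows n = 0 and n = 1: row n+2 is obtained by dividing by p m.+2 n. *)
Lemma hankel_rec_unique (R : idomainType) (p q : nat -> nat -> R) :
  (forall m n, p m n != 0) -> hankel_rec p -> hankel_rec q ->
  (forall m, q m 0%N = p m 0%N /\ q m 1%N = p m 1%N) ->
  forall m n, q m n = p m n.
Proof.
move=> p_neq0 p_rec q_rec q01.
suff rows_eq n m : q m n = p m n /\ q m n.+1 = p m n.+1.
  by move=> m n; case: (rows_eq n m).
elim: n m => [|n IH] m; first exact: q01.
split; first by case: (IH m).
have := q_rec m n.
case: (IH m) => _ ->; case: (IH m.+1) => _ ->; case: (IH m.+2) => -> ->.
by rewrite p_rec => /(mulIf (p_neq0 m.+2 n)) ->.
Qed.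

Section RisingProducts.
Variable C : numFieldType.

Definition rise (c k : nat) : C := \prod_(1 <= i < k) (c + i)%:R.

Lemma rise1 c : rise c 1 = 1.
Proof. by rewrite /rise big_geq. Qed.

Lemma riseS c k : rise c k.+2 = rise c k.+1 * (c + k.+1)%:R.
Proof. by rewrite /rise big_nat_recr. Qed.

Lemma rise_neq0 c k : rise c k != 0.
Proof.
rewrite lt0r_neq0 // /rise big_nat; apply: prodr_gt0 => i /andP[i_gt0 _].
by rewrite ltr0n; lia.
Qed.

Lemma rise_shift2 c k : rise c.+2 k.+1 = rise c k.+3 / rise c 3.
Proof.
apply: (canRL (mulfK (rise_neq0 c 3))).
elim: k => [|k IH]; first by rewrite rise1 mul1r.
by rewrite riseS mulrAC IH [in RHS]riseS !addSn !addnS.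
Qed.

Lemma prod_block_rise c m :
  \prod_(1 <= i < m.+1) (c + i + m)%:R = rise c (2 * m).+1 / rise c m.+1 :> C.
Proof.
apply: (canRL (mulfK (rise_neq0 c m.+1))).
rewrite /rise [in RHS](big_cat_nat _ (n := m.+1)) //=; last by lia.
rewrite mulrC; congr (_ * _).
rewrite -[m.+1]add1n big_addn.
have -> : ((2 * m).+1 - m = 1 + m)%N by lia.
by apply: eq_bigr => i _; rewrite addnA.
Qed.

End RisingProducts.

(* Side conditions left by 'field': the rising products and the casts of
   positive naturals are nonzero. *)
Ltac nonzero_side :=
  rewrite ?rise_neq0; try rewrite -[1 : _]/(1%:R : _);
  rewrite -?natrM -?natrD ?pnatr_eq0 /=; try lia.

Section DoubleProduct.
Variable C : numFieldType.

Notation p := (pmn C).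

Lemma pmn_m0 n : p 0 n = 1.
Proof. by rewrite /pmn big_geq. Qed.

(* Ratio p_{m+1}(n) / p_m(n): the new column j = m contributes
   prod_{1<=i<=m} (2n+i+m)/(i+m). *)
Definition ratio_m (m n : nat) : C :=
  rise C (2 * n) (2 * m).+1 / rise C (2 * n) m.+1
  * (rise C 0 m.+1 / rise C 0 (2 * m).+1).

Lemma pmn_succ_m m n : p m.+1 n = p m n * ratio_m m n.
Proof.
rewrite /pmn /ratio_m.
transitivity (\prod_(1 <= i < m.+1)
   (\prod_(i <= j < m) ((2 * n + i + j)%N%:R / (i + j)%N%:R : C)
     * ((2 * n + i + m)%N%:R / (i + m)%N%:R))).
  by apply: eq_big_nat => i /andP[_ lt_im]; rewrite big_nat_recr.
rewrite big_split /=; congr (_ * _).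
  case: m => [|m]; first by rewrite !big_geq.
  by rewrite big_nat_recr //= [X in _ * X]big_geq // mulr1.
rewrite prodf_div prod_block_rise.
by rewrite (prod_block_rise C 0 m) invf_div.
Qed.

Definition ratio_n (m n : nat) : C :=
  rise C (2 * n) (2 * m).+1 / rise C (2 * n) m.+2
  * (rise C (2 * n) 2 / rise C (2 * n) m.+1).

Lemma double_succ n : (2 * n.+1 = (2 * n).+2)%N.
Proof. by rewrite mulnS add2n. Qed.

Lemma pmn_succ_n m n : p m n.+1 = p m n * ratio_n m n.
Proof.
elim: m => [|m IH].
  by rewrite !pmn_m0 /ratio_n muln0 rise1 mul1r divr1 mul1r mulVf // rise_neq0.
rewrite !pmn_succ_m IH /ratio_m /ratio_n !double_succ !rise_shift2.
by field; rewrite !rise_neq0.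
Qed.

Lemma pmn_hankel_rec : hankel_rec p.
Proof.
move=> m n; rewrite !pmn_succ_n !pmn_succ_m /ratio_m /ratio_n !double_succ.
rewrite !rise_shift2 !riseS !rise1.
by field; nonzero_side.
Qed.

Lemma pmn_n0 m : p m 0 = 1.
Proof.
elim: m => [|m IH]; first exact: pmn_m0.
rewrite pmn_succ_m IH /ratio_m muln0 mul1r.
by field; nonzero_side.
Qed.

(* C_{m+1} / C_m = (2m+1)(2m+2) / ((m+1)(m+2)), which is ratio_m m 1; the
   binomial part is the identity binom(2m+2,m+1)(m+1)^2 = binom(2m,m)(2m+1)(2m+2). *)
Lemma catalan_succ m : catalan C m.+1 = catalan C m * ratio_m m 1.
Proof.
have bin_succ : ('C(2 * m.+1, m.+1) * m.+1 * m.+1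
                 = 'C(2 * m, m) * (2 * m).+1 * (2 * m).+2)%N.
  have diag := mul_bin_diag (2 * m).+2 m.
  have down := mul_bin_down (2 * m).+1 m.
  rewrite (_ : (2 * m).+1 - m = m.+1)%N in down; last by lia.
  rewrite double_succ /=; simpl in diag, down; nia.
have binC : ('C(2 * m.+1, m.+1))%:R
     = ('C(2 * m, m))%:R * ((2 * m).+1)%:R * ((2 * m).+2)%:R
       / ((m.+1)%:R * (m.+1)%:R) :> C.
  apply: (canRL (mulfK _)); first by rewrite -natrM pnatr_eq0.
  by rewrite mulrA -!natrM bin_succ.
rewrite /catalan binC /ratio_m muln1 !rise_shift2 !riseS !rise1.
by field; nonzero_side.
Qed.

Lemma pmn_n1 m : p m 1 = catalan C m.
Proof.
elim: m => [|m IH]; first by rewrite pmn_m0 /catalan muln0 bin0 divr1.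
by rewrite pmn_succ_m IH catalan_succ.
Qed.

Lemma pmn_gt0 m n : 0 < p m n.
Proof.
rewrite /pmn big_nat; apply: prodr_gt0 => i /andP[i_gt0 _].
rewrite big_nat; apply: prodr_gt0 => j /andP[j_ge _].
by apply: divr_gt0; rewrite ltr0n; lia.
Qed.

End DoubleProduct.

Theorem lemma2 (C : numClosedFieldType) :
  (forall m : nat, pmn C m 0 = 1 /\ pmn C m 1 = catalan C m) /\
  (forall m n : nat,
     pmn C m n.+1 * pmn C m.+2 n.+1 - (pmn C m.+1 n.+1) ^+ 2
       = pmn C m n.+2 * pmn C m.+2 n) /\
  (forall q : nat -> nat -> C,
     (forall m : nat, q m 0%N = 1 /\ q m 1%N = catalan C m) ->
     (forall m n : nat,
        q m n.+1 * q m.+2 n.+1 - (q m.+1 n.+1) ^+ 2 = q m n.+2 * q m.+2 n) ->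
     forall m n : nat, q m n = pmn C m n).
Proof.
split; first by move=> m; rewrite pmn_n0 pmn_n1.
split; first exact: pmn_hankel_rec.
move=> q q01 q_rec; apply: hankel_rec_unique => //.
- by move=> m n; rewrite lt0r_neq0 // pmn_gt0.
- exact: pmn_hankel_rec.
- by move=> m; rewrite pmn_n0 pmn_n1; exact: q01.
Qed.
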